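(* Let $D$ be a tournament missing disjoint paths of length 2 and let $C=a_1b_1c_1,\dots,a_kb_kc_k$ be a double cycle in $\Delta(D)$. Then for all $i\in\{1,\dots,k\}$, with $H=D[K(C)]$: (1) $N^{++}_H(a_i)=N^{++}_H(c_i)$; (2) $N^{--}_H(a_i)=N^{--}_H(c_i)$.
   Context: All digraphs are finite oriented graphs; $D[X]$ is the induced subdigraph. $N^+_H(v)$, $N^-_H(v)$ are out/in-neighborhoods in $H$; $N^{++}_H(v)$ is the set of vertices $w\notin N_H^+(v)\cup\{v\}$ with $u\to w$ in $H$ for some $u\in N_H^+(v)$, and $N^{--}_H(v)$ is the set of vertices $w\notin N_H^-(v)\cup\{v\}$ with $w\to u$ in $H$ for some $u\in N_H^-(v)$. A missing edge is a pair of distinct non-adjacent vertices; the missing graph is formed by the missing edges. $D$ is a tournament missing disjoint paths of length 2 if its missing graph is a vertex-disjoint union of paths each with exactly two edges. For missing edges $\{x,y\},\{a,b\}$, $\{x,y\}$ loses to $\{a,b\}$ (written $xy\to ab$) if the endpoints can be labelled so that $x\to a$, $b\notin N^+(x)\cup N^{++}(x)$, $y\to b$, $a\notin N^+(y)\cup N^{++}(y)$ (neighborhoods in $D$). $\Delta(D)$ has the missing edges as vertices and arcs $(e,e')$ whenever $e$ loses to $e'$. For missing paths $abc$, $xyz$, $abc\to xyz$ means each of $ab,bc$ loses to each of $xy,yz$. A double cycle is a sequence $C=a_1b_1c_1,\dots,a_kb_kc_k$ ($k\ge2$) of distinct missing paths of length 2 (components of the missing graph, edges $a_ib_i,b_ic_i$)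 with $a_ib_ic_i\to a_{i+1}b_{i+1}c_{i+1}$ for all $i$, indices modulo $k$. $K(C)=\{a_i,b_i,c_i:1\le i\le k\}$. *)

From mathcomp Require Import all_boot.
Set Implicit Arguments. Unset Strict Implicit. Unset Printing Implicit Defensive.

Section Digraph.
Variable V : finType.
Variable arc : rel V.

Definition oriented := (forall x, ~~ arc x x) /\ (forall x y, arc x y -> ~~ arc y x).

Definition nonadj (x y : V) : bool := [&& x != y, ~~ arc x y & ~~ arc y x].

(* Neighbourhoods in the induced subdigraph H = D[X]. *)
Definition outN (X : {set V}) (v : V) : {set V} := [set w in X | arc v w].
Definition inN (X : {set V}) (v : V) : {set V} := [set w in X | arc w v].
Definition outN2 (X : {set V}) (v : V) : {set V} :=
  [set w in X | (w \notin outN X v) && (w != v) &&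
                [exists u, (u \in outN X v) && arc u w]].
Definition inN2 (X : {set V}) (v : V) : {set V} :=
  [set w in X | (w \notin inN X v) && (w != v) &&
                [exists u, (u \in inN X v) && arc w u]].

(* a b c is a component of the missing graph which is a path with exactly
   two edges ab, bc (b the middle vertex) *)
Definition missing_path (a b c : V) : Prop :=
  [/\ nonadj a b, nonadj b c, a != c,
      (forall z, nonadj a z -> z = b) /\ (forall z, nonadj c z -> z = b) &
      (forall z, nonadj b z -> z = a \/ z = c)].

Definition tournament_missing_P2 : Prop :=
  oriented /\
  forall x y, nonadj x y ->
    exists a b c, missing_path a b c /\
      ([set x; y] = [set a; b] \/ [set x; y] = [set b; c]).

Definition loses_lab (x y a b : V) : bool :=
  [&& arc x a, b \notin outN setT x :|: outN2 setT x,
      arc y b & a \notin outN setT y :|: outN2 setT y].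

Definition loses (x y a b : V) : bool :=
  [|| loses_lab x y a b, loses_lab y x a b, loses_lab x y b a
    | loses_lab y x b a].

Definition path_loses (a b c x y z : V) : bool :=
  [&& loses a b x y, loses a b y z, loses b c x y & loses b c y z].

Definition double_cycle (k : nat) (a b c : nat -> V) : Prop :=
  [/\ 2 <= k,
      (forall i, i < k -> missing_path (a i) (b i) (c i)),
      (forall i j, i < k -> j < k -> i != j ->
         [set a i; b i; c i] != [set a j; b j; c j]) &
      (forall i, i < k ->
         path_loses (a i) (b i) (c i)
                    (a (i.+1 %% k)) (b (i.+1 %% k)) (c (i.+1 %% k)))].

Definition KC (k : nat) (a b c : nat -> V) : {set V} :=
  [set v | [exists i : 'I_k, v \in [set a i; b i; c i]]].

End Digraph.

From mathcomp Require Import all_boot zify.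
Set Implicit Arguments. Unset Strict Implicit. Unset Printing Implicit Defensive.

(* Two consecutive paths P -> Q of a double cycle are joined in one of two rigid
   patterns.  In both, every vertex of P has an in-neighbour in Q and every vertex of
   Q an out-neighbour in P, and a "back arc" y -> x from Q to P admits no 2-path
   x -> u -> y; so a vertex outside the layers visited by a chain of back arcs sees
   the whole chain from the same side.  If a_i -> v -> c_i for v on another path,
   chains from a_i up to v and from v on to c_i combine into a chain of back arcs once
   around the cycle from a_i to c_i.  The vertex y of its last layer but one beats a_i
   and is beaten by c_i; as a_i and c_i are adjacent, the rigid pattern forces
   a_i -> y as well, a contradiction.  Hence a_i and c_i have the same in- and
   out-neighbours in K(C) minus {a_i, c_i}, so the same second neighbourhoods. *)

Lemma set3_1 {T : finType} {a b c : T} : a \in [set a; b; c].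
Proof. by rewrite !inE eqxx. Qed.

Lemma set3_2 {T : finType} {a b c : T} : b \in [set a; b; c].
Proof. by rewrite !inE eqxx orbT. Qed.

Lemma set3_3 {T : finType} {a b c : T} : c \in [set a; b; c].
Proof. by rewrite !inE eqxx orbT. Qed.

Lemma in_set3P (T : finType) (a b c x : T) :
  x \in [set a; b; c] -> [\/ x = a, x = b | x = c].
Proof. by rewrite !inE => /orP[/orP[]|] /eqP; [constructor 1|constructor 2|constructor 3]. Qed.

Section Digraph.
Variables (V : finType) (arc : rel V).

Definition no_2path (x y : V) : Prop := forall u, ~~ (arc x u && arc u y).

Lemma nonadjC x y : nonadj arc x y = nonadj arc y x.
Proof. by rewrite /nonadj eq_sym [~~ arc x y && _]andbC. Qed.

Lemma oriented_asym : oriented arc -> forall x y, arc x y -> arc y x -> False.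
Proof. by case=> _ H x y /H/negP. Qed.

Lemma notin_outN12 x q : x != q ->
  q \notin outN arc setT x :|: outN2 arc setT x -> ~~ arc x q /\ no_2path x q.
Proof.
move=> xq; rewrite !inE /= negb_or => /andP[nxq Hq]; split=> // u.
apply/negP => /andP[xu uq]; move: Hq; rewrite nxq (eq_sym q) xq /= => /negP; apply.
by apply/existsP; exists u; rewrite uq andbT /outN inE in_setT.
Qed.

Lemma loses_labP x y p q : x != q -> y != p -> loses_lab arc x y p q ->
  [/\ arc x p, arc y q, ~~ arc x q /\ no_2path x q & ~~ arc y p /\ no_2path y p].
Proof. by move=> xq yp /and4P[xp Hq yq Hp]; split=> //; apply: notin_outN12. Qed.

Lemma losesP x y p q : x != p -> x != q -> y != p -> y != q -> loses arc x y p q ->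
  [/\ arc x p, arc y q, ~~ arc x q /\ no_2path x q & ~~ arc y p /\ no_2path y p] \/
  [/\ arc x q, arc y p, ~~ arc x p /\ no_2path x p & ~~ arc y q /\ no_2path y q].
Proof.
move=> xp xq yp yq /or4P[] /loses_labP.
- by move/(_ xq yp); left.
- by case/(_ yq xp) => *; right; split.
- by case/(_ xp yq) => *; right; split.
- by case/(_ yp xq) => *; left; split.
Qed.

Section MissingPath.
Variables a b c : V.
Hypothesis abc : missing_path arc a b c.

Lemma missing_path_ends_adj : ~~ nonadj arc a c.
Proof. by case: abc => _ bc _ [Ha _] _; apply/negP => /Ha ab; rewrite ab /nonadj eqxx in bc. Qed.

Lemma missing_path_nonadj_closed x z :
  x \in [set a; b; c] -> nonadj arc x z -> z \in [set a; b; c].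
Proof.
case: abc => _ _ _ [Ha Hc] Hb /in_set3P[->|->|->] xz.
- by rewrite (Ha _ xz) !inE eqxx orbT.
- by case: (Hb _ xz) => ->; rewrite !inE eqxx ?orbT.
- by rewrite (Hc _ xz) !inE eqxx orbT.
Qed.

Lemma missing_path_adj y v : y \in [set a; b; c] -> v \notin [set a; b; c] ->
  arc v y || arc y v.
Proof.
move=> yS vS; apply: contraR vS; rewrite negb_or => /andP[nvy nyv].
have [<- //|yv] := eqVneq y v.
by apply: (missing_path_nonadj_closed yS); rewrite /nonadj yv nvy nyv.
Qed.

Lemma missing_path_partner x : x \in [set a; b; c] ->
  exists2 q, q \in [set a; b; c] & nonadj arc x q.
Proof.
case: abc => ab bc _ _ _ /in_set3P[->|->|->].
- by exists b; rewrite ?inE ?eqxx ?orbT.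
- by exists a; rewrite ?inE ?eqxx ?orbT // nonadjC.
- by exists b; rewrite ?inE ?eqxx ?orbT // nonadjC.
Qed.

Lemma missing_path_component x : x \in [set a; b; c] -> forall z, (z \in [set a; b; c]) =
  [|| z == x, nonadj arc x z | [exists w, nonadj arc x w && nonadj arc w z]].
Proof.
move=> xS z; apply/idP/idP; last first.
  case/or3P => [/eqP -> //|/(missing_path_nonadj_closed xS) //|/existsP[w /andP[xw wz]]].
  exact: missing_path_nonadj_closed (missing_path_nonadj_closed xS xw) wz.
case: abc => ab bc _ _ _.
move: xS => /in_set3P[->|->|->] /in_set3P[->|->|->]; rewrite ?eqxx ?ab ?bc ?orbT //.
all: try by rewrite nonadjC ?ab ?bc ?orbT.
all: apply/orP; right; apply/orP; right; apply/existsP; exists b.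
  by rewrite ab bc.
by rewrite nonadjC bc nonadjC ab.
Qed.

End MissingPath.

Lemma missing_path_eq a b c a' b' c' x :
  missing_path arc a b c -> missing_path arc a' b' c' ->
  x \in [set a; b; c] -> x \in [set a'; b'; c'] -> [set a; b; c] = [set a'; b'; c'].
Proof.
move=> abc abc' xS xS'; apply/setP => z.
by rewrite (missing_path_component abc xS) (missing_path_component abc' xS').
Qed.

Section Links.
Hypothesis orient : oriented arc.

Definition straight_links a b c a' b' c' : Prop :=
  [/\ [/\ arc a' a, arc c' a, arc a' c, arc c' c & arc b' b],
      [/\ arc a b', arc c b', arc b a' & arc b c'] &
      [/\ no_2path a a', no_2path a c', no_2path c a', no_2path c c' & no_2path b b']].

Definition crossed_links a b c a' b' c' : Prop :=
  [/\ [/\ arc b b', arc b' a, arc b' c, arc a a' & arc a c'],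
      [/\ arc c a', arc c c', arc a' b & arc c' b] &
      [/\ no_2path a b', no_2path c b', no_2path b a' & no_2path b c']].

Lemma arc_of_adj u v : ~~ arc v u -> arc u v || arc v u -> arc u v.
Proof. by move=> /negbTE ->; rewrite orbF. Qed.

Ltac absurd_arcs := match goal with
  | H : is_true (~~ ?P), H' : is_true ?P |- _ => by rewrite H' in H
  | H : is_true (arc ?x ?y), H' : is_true (arc ?y ?x) |- _ =>
      exfalso; exact: (oriented_asym orient H H')
  end.

Ltac close_links adj := split; split; first [assumption
  | match goal with H : is_true (~~ arc ?v ?u) |- is_true (arc ?u ?v) =>
      apply: (arc_of_adj H);
      first [ by apply: adj; rewrite !inE eqxx ?orbT
            | by rewrite orbC; apply: adj; rewrite !inE eqxx ?orbT ]
    end].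

Lemma path_loses_links a b c a' b' c' :
  missing_path arc a b c -> missing_path arc a' b' c' ->
  [disjoint [set a; b; c] & [set a'; b'; c']] ->
  path_loses arc a b c a' b' c' ->
  straight_links a b c a' b' c' \/ crossed_links a b c a' b' c'.
Proof.
move=> abc abc' disj /and4P[L1 L2 L3 L4].
have adj u v : u \in [set a; b; c] -> v \in [set a'; b'; c'] -> arc u v || arc v u.
  move=> uS vS; apply: (missing_path_adj abc' vS).
  by apply: contraTN uS => uS'; rewrite (disjointFl disj uS').
have neq u v : u \in [set a; b; c] -> v \in [set a'; b'; c'] -> u != v.
  by move=> uS vS; apply: contraTneq vS => <-; rewrite (disjointFr disj uS).
have := losesP (neq _ _ set3_1 set3_1) (neq _ _ set3_1 set3_2)
               (neq _ _ set3_2 set3_1) (neq _ _ set3_2 set3_2) L1.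
have := losesP (neq _ _ set3_1 set3_2) (neq _ _ set3_1 set3_3)
               (neq _ _ set3_2 set3_2) (neq _ _ set3_2 set3_3) L2.
have := losesP (neq _ _ set3_2 set3_1) (neq _ _ set3_2 set3_2)
               (neq _ _ set3_3 set3_1) (neq _ _ set3_3 set3_2) L3.
have := losesP (neq _ _ set3_2 set3_2) (neq _ _ set3_2 set3_3)
               (neq _ _ set3_3 set3_2) (neq _ _ set3_3 set3_3) L4.
have := adj _ _ set3_2 set3_2.
(* the orientation of [b b'] and the four labellings leave only two consistent
   cases; the arcs they do not mention come from adjacency across the paths *)
case/orP=> ?; do 4 case=> [[? ? [? ?] [? ?]]|[? ? [? ?] [? ?]]]; try absurd_arcs.
all: first [solve [left; close_links adj] | solve [right; close_links adj]].
Qed.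

(* [P] and [Q] are consecutive paths of a double cycle; the chains below follow the
   arcs from [Q] back to [P]. *)
Record back_linked (P Q : {set V}) : Prop := BackLinked {
  link_no_2path x y : x \in P -> y \in Q -> arc y x -> no_2path x y;
  link_pred x : x \in P -> exists2 y, y \in Q & arc y x;
  link_succ y : y \in Q -> exists2 x, x \in P & arc y x;
  link_nonadj_src x x' y : x \in P -> x' \in P -> nonadj arc x x' -> y \in Q ->
    arc x y -> arc y x';
  link_nonadj_dst x y y' : x \in P -> y \in Q -> y' \in Q -> nonadj arc y y' ->
    arc x y -> arc y' x;
  link_adj_dst y z x : y \in P -> z \in Q -> x \in Q -> x != z -> ~~ nonadj arc x z ->
    arc z y -> arc x y }.

Ltac finish_link := first [ assumption | absurd_arcs | by rewrite eqxx in *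
  | match goal with H : is_true (nonadj _ ?x ?x) |- _ => by rewrite /nonadj eqxx in H end ].

Lemma path_loses_back_linked a b c a' b' c' :
  missing_path arc a b c -> missing_path arc a' b' c' ->
  [disjoint [set a; b; c] & [set a'; b'; c']] ->
  path_loses arc a b c a' b' c' ->
  back_linked [set a; b; c] [set a'; b'; c'].
Proof.
move=> abc abc' disj loss.
have nac := missing_path_ends_adj abc; have nac' := missing_path_ends_adj abc'.
have nca : ~~ nonadj arc c a by rewrite nonadjC.
have nca' : ~~ nonadj arc c' a' by rewrite nonadjC.
case: (abc) => ab bc _ _ _; case: (abc') => ab' bc' _ _ _.
have ba : nonadj arc b a by rewrite nonadjC.
have cb : nonadj arc c b by rewrite nonadjC.
have ba' : nonadj arc b' a' by rewrite nonadjC.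
have cb' : nonadj arc c' b' by rewrite nonadjC.
case: (path_loses_links abc abc' disj loss)
  => [[[? ? ? ? ?] [? ? ? ?] [? ? ? ? ?]]|[[? ? ? ? ?] [? ? ? ?] [? ? ? ?]]];
  constructor.
all: try (move=> x y /in_set3P[->|->|->] /in_set3P[->|->|->] ?; finish_link).
all: try (move=> x /in_set3P[->|->|->];
   first [ (exists a'; [exact: set3_1 | finish_link]) | (exists b'; [exact: set3_2 | finish_link])
         | (exists c'; [exact: set3_3 | finish_link]) ]).
all: try (move=> x /in_set3P[->|->|->];
   first [ (exists a; [exact: set3_1 | finish_link]) | (exists b; [exact: set3_2 | finish_link])
         | (exists c; [exact: set3_3 | finish_link]) ]).
all: try (move=> x y z /in_set3P[->|->|->] /in_set3P[->|->|->] ?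
          /in_set3P[->|->|->] ?; finish_link).
all: try (move=> x y z /in_set3P[->|->|->] /in_set3P[->|->|->]
          /in_set3P[->|->|->] ? ?; finish_link).
all: move=> x y z /in_set3P[->|->|->] /in_set3P[->|->|->]
       /in_set3P[->|->|->] ? ? ?; finish_link.
Qed.

End Links.

Lemma outN2_sub_of_twins (X : {set V}) x z : oriented arc ->
  (forall v, v \in X -> v != x -> v != z -> arc x v = arc z v) ->
  outN2 arc X x \subset outN2 arc X z.
Proof.
move=> orient twins; have [irr _] := orient.
apply/subsetP => w; rewrite !inE.
case/and3P => wX /andP[nxw wx] /existsP[u /andP[]]; rewrite /outN !inE wX /= in nxw *.
move=> /andP[uX xu] uw.
have ux : u != x by apply: contraTneq xu => ->.
have wz : w != z.
  apply: contraTneq uw => ->; have [-> //|uz] := eqVneq u z.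
  by apply/negP => /(oriented_asym orient); apply; rewrite -twins.
have nzw : ~~ arc z w by rewrite -twins.
have uz : u != z by apply: contraNneq nzw => <-.
rewrite nzw wz /=; apply/existsP; exists u.
by rewrite inE uX -twins ?xu.
Qed.

Lemma oriented_converse : oriented arc -> oriented (fun x y => arc y x).
Proof. by case=> irr asym; split=> // x y; apply: asym. Qed.

End Digraph.

Lemma N2_eq_of_twins (V : finType) (arc : rel V) (X : {set V}) x z : oriented arc ->
  (forall v, v \in X -> v != x -> v != z -> arc x v = arc z v /\ arc v x = arc v z) ->
  outN2 arc X x = outN2 arc X z /\ inN2 arc X x = inN2 arc X z.
Proof.
move=> orient twins; have orient' := oriented_converse orient.
(* [inN2] is [outN2] of the converse digraph *)
split; apply/eqP; rewrite eqEsubset; apply/andP; split.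
- by apply: outN2_sub_of_twins => // v vX vx vz; case: (twins v vX vx vz).
- by apply: outN2_sub_of_twins => // v vX vz vx; case: (twins v vX vx vz).
- apply: (outN2_sub_of_twins (arc := fun x y => arc y x)) => // v vX vx vz.
  by case: (twins v vX vx vz).
- apply: (outN2_sub_of_twins (arc := fun x y => arc y x)) => // v vX vz vx.
  by case: (twins v vX vx vz).
Qed.

(* The paths of a double cycle, indexed by all of [nat] periodically, so that chains
   around the cycle need no arithmetic modulo [k]. *)
Record cyclic_layers (V : finType) (arc : rel V) (k : nat) (P : nat -> {set V}) : Prop :=
  CyclicLayers {
  layer_linked t : back_linked arc (P t) (P t.+1);
  layer_periodic t : P (t + k) = P t;
  layer_mod t t' x : x \in P t -> x \in P t' -> t = t' %[mod k];
  layer_adj t v y : y \in P t -> v \notin P t -> arc v y || arc y v;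
  layer_partner t v : v \in P t -> exists2 q, q \in P t & nonadj arc v q }.

Section CyclicLayers.
Variables (V : finType) (arc : rel V) (k : nat) (P : nat -> {set V}).
Hypothesis orient : oriented arc.
Hypothesis layers : cyclic_layers arc k P.

Lemma notin_later_layer i j x : i < j < i + k -> x \in P i -> x \notin P j.
Proof.
case/andP=> ij jik xi; apply/negP => /(layer_mod layers xi) /eqP.
rewrite -(subnKC (ltnW ij)) -{1}[i]addn0 eqn_modDl mod0n modn_small; lia.
Qed.

Lemma notin_earlier_layer i j x : i < j < i + k -> x \in P j -> x \notin P i.
Proof. by move=> ijk; apply: contraTN => /(notin_later_layer ijk). Qed.

Definition back_step t x y := [/\ x \in P t, y \in P t.+1 & arc y x].

Fixpoint back_chain n t x z : Prop :=
  if n is n'.+1 then exists2 y, back_step t x y & back_chain n' t.+1 y z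
  else x = z /\ x \in P t.

Lemma back_chain_ends n t x z : back_chain n t x z -> x \in P t /\ z \in P (t + n).
Proof.
elim: n t x => [|n IH] t x /=; first by case=> <-; rewrite addn0.
by case=> y [xP _ _] /IH[_]; rewrite addSnnS.
Qed.

Lemma back_chain_cat m n t x y z :
  back_chain m t x y -> back_chain n (t + m) y z -> back_chain (m + n) t x z.
Proof.
elim: m t x => [|m IH] t x /=; first by case=> <-; rewrite addn0.
by case=> y0 st ch ch'; exists y0 => //; apply: IH ch _; rewrite addSnnS.
Qed.

Lemma back_chain_rcons n t x y z :
  back_chain n t x y -> back_step (t + n) y z -> back_chain n.+1 t x z.
Proof.
move=> ch [yP zP zy]; rewrite -addn1; apply: back_chain_cat ch _.
by exists z; rewrite // addnS.
Qed.

Lemma back_chain_rconsP n t x z :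
  back_chain n.+1 t x z -> exists2 y, back_chain n t x y & back_step (t + n) y z.
Proof.
elim: n t x => [|n IH] t x /= [y st ch].
  by case: ch => <- _; exists x; rewrite ?addn0 //; case: st.
have [y' ch' st'] := IH _ _ ch.
by exists y'; [exists y | rewrite addSnnS in st'].
Qed.

Lemma back_chain_from n t x : x \in P t -> exists z, back_chain n t x z.
Proof.
elim: n t x => [|n IH] t x xP; first by exists x.
have [y yP yx] := link_pred (layer_linked layers t) xP.
by have [z ch] := IH _ _ yP; exists z, y.
Qed.

Lemma back_chain_to n t z : z \in P (t + n) -> exists x, back_chain n t x z.
Proof.
elim: n t => [|n IH] t zP; first by exists z; rewrite addn0 in zP.
rewrite -addSnnS in zP; have [y ch] := IH _ zP.
have [yP _] := back_chain_ends ch.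
by have [x xP yx] := link_succ (layer_linked layers t) yP; exists x, y.
Qed.

Lemma back_step_arc_out t y z v : back_step t y z -> arc y v -> v \notin P t.+1 -> arc z v.
Proof.
move=> [yP zP zy] yv vP.
have /negbTE nvz := link_no_2path (layer_linked layers t) yP zP zy v; rewrite yv /= in nvz.
by move: (layer_adj layers zP vP); rewrite nvz.
Qed.

Lemma back_step_arc_in t x y v : back_step t x y -> arc v y -> v \notin P t -> arc v x.
Proof.
move=> [xP yP yx] vy vP.
have /negbTE nxv := link_no_2path (layer_linked layers t) xP yP yx v; rewrite vy andbT in nxv.
by move: (layer_adj layers xP vP); rewrite nxv orbF.
Qed.

Lemma back_chain_arc_out n t x z v j : back_chain n t x z -> arc x v -> v \in P j ->
  t + n < j <= t + k -> arc z v.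
Proof.
elim: n t x => [|n IH] t x /=; first by case=> <-.
move=> [y st ch] xv vP jt; apply: (IH _ _ ch _ vP); last lia.
by apply: (back_step_arc_out st xv); apply: (notin_earlier_layer _ vP); lia.
Qed.

Lemma back_chain_arc_in n t x z v j : back_chain n t x z -> arc v z -> v \in P j ->
  j < t -> t + n <= j + k -> arc v x.
Proof.
elim: n t x => [|n IH] t x /=; first by case=> ->.
move=> [y st ch] vz vP jt tj; apply: (back_step_arc_in st).
  by apply: (IH _ _ ch vz vP); lia.
by apply: (notin_later_layer _ vP); lia.
Qed.

Lemma back_chain_around_nonadj i x z :
  1 < k -> back_chain k i x z -> x != z -> nonadj arc x z.
Proof.
move=> k1; have [n Ek] : exists n, k = n.+2 by exists k.-2; lia.
have Eik : (i.+1 + n).+1 = i + k by lia.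
have range : i.+1 + n < i + k <= i.+1 + k by lia.
rewrite Ek => -[y1 [xP y1P y1x] ch] xz; apply/contraT => nxz.
have [y ch' [yP zP zy]] := back_chain_rconsP ch.
have xPk : x \in P (i + k) by rewrite (layer_periodic layers).
have yx := back_chain_arc_out ch' y1x xPk range.
have xP' : x \in P (i.+1 + n).+1 by rewrite Eik.
have xy := link_adj_dst (layer_linked layers _) yP zP xP' xz nxz zy.
by case: (oriented_asym orient xy yx).
Qed.

Lemma layer_pair_no_2path i j x z v : i < j < i + k ->
  x \in P i -> z \in P i -> x != z -> ~~ nonadj arc x z -> v \in P j ->
  ~~ (arc x v && arc v z).
Proof.
case/andP=> ij jik; have [d Ej] : exists d, j = (i + d).+1 by exists (j - i).-1; lia.
rewrite {}Ej {ij} in jik *.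
have [e Ek] : exists e, k = d.+2 + e by exists (k - d.+2); lia.
have Eik : (i + d).+2 + e = i + k by lia.
have out_range : i + d < (i + d).+1 <= i + k by lia.
have in_range : (i + d).+2 + e <= (i + d).+1 + k by lia.
have k1 : 1 < k by lia.
move=> xP zP xz nxz vP; apply/negP => /andP[xv vz].
(* chain [x] up to the layer before [v], step to the partner [q] of [v], and continue
   from [q] by a chain ending at [z]: together, a chain once around the cycle *)
have [xm ch1] := back_chain_from d xP.
have [_ xmP] := back_chain_ends ch1.
have xmv := back_chain_arc_out ch1 xv vP out_range.
have [q qP vq] := layer_partner layers vP.
have qxm := link_nonadj_dst (layer_linked layers _) xmP vP qP vq xmv.
have ch2 : back_chain d.+1 i x q by apply: (back_chain_rcons ch1).
have zP' : z \in P ((i + d).+2 + e) by rewrite Eik (layer_periodic layers).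
have [y ch3] := back_chain_to zP'.
have [yP _] := back_chain_ends ch3.
have vy := back_chain_arc_in ch3 vz vP (ltnSn _) in_range.
have yq := link_nonadj_src (layer_linked layers _) vP qP vq yP vy.
have ch4 : back_chain e.+1 (i + d.+1) q z by exists y; rewrite ?addnS.
have := back_chain_cat ch2 ch4; rewrite -addSnnS -Ek => ch.
by rewrite (back_chain_around_nonadj k1 ch xz) in nxz.
Qed.

Lemma layer_pair_twins i j x z v : i < j < i + k ->
  x \in P i -> z \in P i -> x != z -> ~~ nonadj arc x z -> v \in P j ->
  arc x v = arc z v /\ arc v x = arc v z.
Proof.
move=> ijk xP zP xz nxz vP; have vPi := notin_earlier_layer ijk vP.
have := layer_pair_no_2path ijk xP zP xz nxz vP.
have := layer_pair_no_2path ijk zP xP _ _ vP; rewrite eq_sym nonadjC => /(_ xz nxz).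
have [_ asym] := orient.
move: (layer_adj layers xP vPi) (layer_adj layers zP vPi) (asym x v) (asym z v).
by case: (arc x v) (arc v x) (arc z v) (arc v z) => [] [] [] [].
Qed.

End CyclicLayers.

Definition double_cycle_layer (V : finType) (k : nat) (a b c : nat -> V) (t : nat) :
  {set V} := [set a (t %% k); b (t %% k); c (t %% k)].

Lemma double_cycle_layer_small (V : finType) k (a b c : nat -> V) t :
  t < k -> double_cycle_layer k a b c t = [set a t; b t; c t].
Proof. by move=> tk; rewrite /double_cycle_layer modn_small. Qed.

Lemma double_cycle_layer_later (V : finType) k (a b c : nat -> V) i t :
  i < k -> t < k -> t != i ->
  exists2 j, i < j < i + k & double_cycle_layer k a b c j = [set a t; b t; c t].
Proof.
move=> ik tk ti; case: (ltnP i t) => it.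
  by exists t; rewrite ?double_cycle_layer_small // it ltn_addl.
exists (t + k); last by rewrite /double_cycle_layer modnDr modn_small.
by rewrite ltn_add2r ltn_addl //= ltn_neqAle ti it.
Qed.

Lemma double_cycle_layers (V : finType) (arc : rel V) k a b c :
  oriented arc -> double_cycle arc k a b c ->
  cyclic_layers arc k (double_cycle_layer k a b c).
Proof.
move=> orient [k2 paths distinct loss]; have k0 : 0 < k by apply: ltnW.
have path t : missing_path arc (a (t %% k)) (b (t %% k)) (c (t %% k)).
  exact: paths (ltn_pmod t k0).
have lmod t t' x : x \in double_cycle_layer k a b c t ->
    x \in double_cycle_layer k a b c t' -> t = t' %[mod k].
  move=> xt xt'; apply/eqP/negPn/negP => tt'.
  move: (distinct _ _ (ltn_pmod t k0) (ltn_pmod t' k0) tt').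
  by rewrite (missing_path_eq (path t) (path t') xt xt') eqxx.
split=> [t | t | // | t v y | t v].
- have disj : [disjoint double_cycle_layer k a b c t & double_cycle_layer k a b c t.+1].
    rewrite disjoint_subset; apply/subsetP => x xt; apply/negP => /(lmod _ _ _ xt) /eqP.
    by rewrite -addn1 -{1}[t]addn0 eqn_modDl mod0n modn_small.
  have := loss _ (ltn_pmod t k0); rewrite -addn1 modnDml addn1 => tloss.
  exact: (path_loses_back_linked orient (path t) (path t.+1) disj tloss).
- by rewrite /double_cycle_layer modnDr.
- exact: (missing_path_adj (path t)).
- exact: (missing_path_partner (path t)).
Qed.

Theorem lemma4p9 (V : finType) (arc : rel V) (k : nat) (a b c : nat -> V) :
  tournament_missing_P2 arc ->
  double_cycle arc k a b c ->
  forall i, i < k ->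
    outN2 arc (KC k a b c) (a i) = outN2 arc (KC k a b c) (c i) /\
    inN2 arc (KC k a b c) (a i) = inN2 arc (KC k a b c) (c i).
Proof.
(* only orientation is used: the structure of the paths comes with the double cycle *)
case=> orient _ cyc i ik; have layers := double_cycle_layers orient cyc.
case: cyc => _ paths _ _; have [ab bc ac _ _] := paths i ik.
have Pi := double_cycle_layer_small a b c ik.
have aP : a i \in double_cycle_layer k a b c i by rewrite Pi set3_1.
have cP : c i \in double_cycle_layer k a b c i by rewrite Pi set3_3.
apply: (N2_eq_of_twins orient) => v /[1!inE] /existsP[t vt] vai vci.
have [ti|ti] := eqVneq (val t) i.
  move: vt; rewrite ti => /in_set3P[] vE; subst v; rewrite ?eqxx // in vai vci.
  by move: ab bc; rewrite /nonadj => /and3P[_ /negbTE-> /negbTE->] /and3P[_ /negbTE-> /negbTE->].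
have [j ijk Pj] := double_cycle_layer_later a b c ik (ltn_ord t) ti.
have nac := missing_path_ends_adj (paths i ik).
by apply: (layer_pair_twins orient layers ijk aP cP ac nac); rewrite Pj.
Qed.
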